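(* If $M\in\mathrm{PGL}_2(\mathbb{Q})$ is such that $MAM^{-1}\in\mathrm{PSL}_2(\mathbb{Z})$ for every $A\in\Gamma^3$, then $M\in\mathrm{PSL}_2(\mathbb{Z})\cup\mathrm{PSL}_2(\mathbb{Z})J$, where $J=\left(\begin{smallmatrix}-1&0\\0&1\end{smallmatrix}\right)$.
   Context: $\Gamma^3=\{\left(\begin{smallmatrix}a&b\\c&d\end{smallmatrix}\right)\in\mathrm{PSL}_2(\mathbb{Z}) : ab+cd\equiv0\bmod3\}$. Elements of $\mathrm{PGL}_2(\mathbb{Q})$ are invertible rational $2\times2$ matrices modulo nonzero scalars. *)

From HB Require Import structures.
From mathcomp Require Import all_boot all_order all_algebra.
Set Implicit Arguments. Unset Strict Implicit. Unset Printing Implicit Defensive.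
Import Order.TTheory GRing.Theory Num.Theory.
Local Open Scope ring_scope.

Definition SL2Z (A : 'M[int]_2) : Prop := \det A = 1.

(* Gamma^3 : ab + cd = 0 mod 3 for A = [[a,b],[c,d]] (well defined on PSL_2). *)
Definition Gamma3 (A : 'M[int]_2) : Prop :=
  SL2Z A /\ (3 %| A ord0 ord0 * A ord0 ord_max + A ord_max ord0 * A ord_max ord_max)%Z.

Definition ratmx (A : 'M[int]_2) : 'M[rat]_2 := map_mx intr A.

(* An element of PGL_2(Q) is represented by an invertible rational matrix X;
   its class lies in (the image of) PSL_2(Z) iff X is a nonzero scalar
   multiple of an integer matrix of determinant 1. *)
Definition inPSL2Z (X : 'M[rat]_2) : Prop :=
  exists (c : rat) (B : 'M[int]_2), c != 0 /\ SL2Z B /\ X = c *: ratmx B.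

Definition Jmx : 'M[rat]_2 := \matrix_(i < 2, j < 2)
  (if i == j then (if i == ord0 then -1 else 1) else 0).

Definition inPSL2ZJ (X : 'M[rat]_2) : Prop :=
  exists (c : rat) (B : 'M[int]_2), c != 0 /\ SL2Z B /\ X = c *: (ratmx B *m Jmx).

From mathcomp Require Import all_boot all_order all_algebra.
From mathcomp Require Import ring.
Import GRing.Theory Num.Theory.
Local Open Scope ring_scope.
Set Implicit Arguments. Unset Strict Implicit.

(* A conjugate of an element of Gamma^3 has determinant 1, so when it lies in
   PSL_2(Z) the scalar in front of its integer representative is +1 or -1: the
   conjugate is an integer matrix.  Integer matrices form a Z-module, and the
   Z-span of Gamma^3 contains every matrix unit E_ij; hence M E_ij M^-1 is
   integral, i.e. M_ki (M^-1)_jl is an integer for all indices.  Rescale M by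
   the inverse of the content g of its entries (the generator of the fractional
   ideal they span), so that B = M/g is a primitive integer matrix; as g is a
   Z-combination of the entries of M, g M^-1 = adj B / det B is integral too,
   and det B * det (g M^-1) = 1 forces det B = 1 or -1. *)

Lemma det_mx22 (R : comNzRingType) (A : 'M[R]_2) :
  \det A = A ord0 ord0 * A ord_max ord_max - A ord0 ord_max * A ord_max ord0.
Proof.
rewrite (expand_det_row _ ord0) !big_ord_recl big_ord0 /cofactor !det_mx11 !mxE /=.
have -> : lift ord0 (0 : 'I_1) = ord_max :> 'I_2 by apply/val_inj.
have -> : lift ord_max (0 : 'I_1) = ord0 :> 'I_2 by apply/val_inj.
by rewrite addr0 expr0 mul1r expr1 /=; ring.
Qed.

Lemma ord2P (i : 'I_2) : i = ord0 \/ i = ord_max.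
Proof. by case: i => [[|[|//]] lti]; [left | right]; apply/val_inj. Qed.

Lemma matrix22P (R : Type) (A B : 'M[R]_2) :
  A ord0 ord0 = B ord0 ord0 -> A ord0 ord_max = B ord0 ord_max ->
  A ord_max ord0 = B ord_max ord0 -> A ord_max ord_max = B ord_max ord_max ->
  A = B.
Proof.
move=> e00 e01 e10 e11; apply/matrixP => i j.
by case: (ord2P i) => ->; case: (ord2P j) => ->.
Qed.

Lemma mul_delta_mxE (R : pzRingType) m n p q (M : 'M[R]_(m, n)) (N : 'M[R]_(p, q))
    i j k l :
  (M *m delta_mx i j *m N) k l = M k i * N j l.
Proof.
by rewrite -(mul_delta_mx (0 : 'I_1)) mulmxA -colE -mulmxA -rowE mxE big_ord1 !mxE.
Qed.

Lemma int_unit (x y : int) : x * y = 1 -> x = 1 \/ x = -1.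
Proof.
rewrite mulrC => /intUnitRing.unitzPl.
by rewrite qualifE => /orP[/eqP -> | /eqP ->]; [left | right].
Qed.

Lemma ratmxE (B : 'M[int]_2) i j : ratmx B i j = (B i j)%:~R.
Proof. by rewrite mxE. Qed.

Lemma ratmxD (A B : 'M[int]_2) : ratmx (A + B) = ratmx A + ratmx B.
Proof. by apply/matrixP => i j; rewrite !mxE intrD. Qed.

Lemma ratmxZ (z : int) (A : 'M[int]_2) : ratmx (z *: A) = z%:~R *: ratmx A.
Proof. by apply/matrixP => i j; rewrite !mxE intrM. Qed.

Lemma ratmx_delta (i j : 'I_2) : ratmx (delta_mx i j) = delta_mx i j.
Proof. by apply/matrixP => a b; rewrite !mxE; case: (_ && _). Qed.

Lemma det_ratmx (B : 'M[int]_2) : \det (ratmx B) = (\det B)%:~R.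
Proof. exact: det_map_mx. Qed.

Lemma ratmx_intP (X : 'M[rat]_2) :
  (forall i j, X i j \is a Num.int) <-> exists B : 'M[int]_2, X = ratmx B.
Proof.
split=> [Xint | [B ->] i j]; last by rewrite ratmxE intr_int.
by exists (\matrix_(i, j) numq (X i j)); apply/matrixP => i j; rewrite !mxE numqK.
Qed.

Lemma inPSL2Z_det1_int (X : 'M[rat]_2) :
  \det X = 1 -> inPSL2Z X -> exists B : 'M[int]_2, X = ratmx B.
Proof.
move=> detX [c [B [_ [detB eX]]]]; rewrite eX in detX *; apply/ratmx_intP => i j.
have /eqP : c ^+ 2 = 1 by rewrite -detX detZ det_ratmx detB mulr1.
rewrite sqrf_eq1 mxE => /orP[/eqP -> | /eqP ->]; rewrite ratmxE.
  by rewrite mul1r intr_int.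
by rewrite mulN1r rpredN intr_int.
Qed.

Definition mx22 (a b c d : int) : 'M[int]_2 := \matrix_(i, j)
  if i == ord0 then (if j == ord0 then a else b) else (if j == ord0 then c else d).

Lemma Gamma3_mx22 a b c d :
  a * d - b * c = 1 -> (3 %| a * b + c * d)%Z -> Gamma3 (mx22 a b c d).
Proof. by move=> det1 div3; split; rewrite /SL2Z ?det_mx22 !mxE. Qed.

Section Gamma3Span.

Variable P : 'M[int]_2 -> Prop.
Hypothesis PD : forall A B, P A -> P B -> P (A + B).
Hypothesis PZ : forall (z : int) A, P A -> P (z *: A).
Hypothesis PGamma3 : forall A, Gamma3 A -> P A.

Lemma Gamma3_span_delta i j : P (delta_mx i j).
Proof.
have P_comb (z1 z2 z3 z4 z5 z6 : int) :
    P (z1 *: mx22 1 0 0 1 + z2 *: mx22 1 3 0 1 + z3 *: mx22 1 0 3 1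
       + z4 *: mx22 0 (-1) 1 0 + z5 *: mx22 1 1 1 2 + z6 *: mx22 2 1 1 1).
  do ![apply: PD]; apply: PZ; apply: PGamma3; exact: Gamma3_mx22.
case: (ord2P i) => ->; case: (ord2P j) => ->.
- suff -> : delta_mx ord0 ord0 = -2 *: mx22 1 0 0 1 + -1 *: mx22 1 3 0 1
    + -1 *: mx22 1 0 3 1 + 0 *: mx22 0 (-1) 1 0 + 1 *: mx22 1 1 1 2
    + 2 *: mx22 2 1 1 1 :> 'M[int]_2 by apply: P_comb.
  by apply: matrix22P; rewrite !mxE.
- suff -> : delta_mx ord0 ord_max = -2 *: mx22 1 0 0 1 + 0 *: mx22 1 3 0 1
    + -1 *: mx22 1 0 3 1 + 1 *: mx22 0 (-1) 1 0 + 1 *: mx22 1 1 1 2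
    + 1 *: mx22 2 1 1 1 :> 'M[int]_2 by apply: P_comb.
  by apply: matrix22P; rewrite !mxE.
- suff -> : delta_mx ord_max ord0 = -2 *: mx22 1 0 0 1 + -1 *: mx22 1 3 0 1
    + 0 *: mx22 1 0 3 1 + -1 *: mx22 0 (-1) 1 0 + 1 *: mx22 1 1 1 2
    + 1 *: mx22 2 1 1 1 :> 'M[int]_2 by apply: P_comb.
  by apply: matrix22P; rewrite !mxE.
- suff -> : delta_mx ord_max ord_max = -2 *: mx22 1 0 0 1 + -1 *: mx22 1 3 0 1
    + -1 *: mx22 1 0 3 1 + 0 *: mx22 0 (-1) 1 0 + 2 *: mx22 1 1 1 2
    + 1 *: mx22 2 1 1 1 :> 'M[int]_2 by apply: P_comb.
  by apply: matrix22P; rewrite !mxE.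
Qed.

End Gamma3Span.

Lemma Gamma3_conj_int_products (M : 'M[rat]_2) :
  M \in unitmx ->
  (forall A, Gamma3 A -> inPSL2Z (M *m ratmx A *m invmx M)) ->
  forall i j k l, M k i * invmx M j l \is a Num.int.
Proof.
move=> Mu conjPSL i j k l; rewrite -mul_delta_mxE -ratmx_delta.
pose conj_int A := forall k l, (M *m ratmx A *m invmx M) k l \is a Num.int.
suff : conj_int (delta_mx i j) by apply.
apply: (Gamma3_span_delta (P := conj_int)) => [A B intA intB a b | z A intA a b | A GA].
- by rewrite ratmxD mulmxDr mulmxDl mxE rpredD.
- by rewrite ratmxZ -scalemxAr -scalemxAl mxE rpredM ?intr_int.
apply/ratmx_intP/inPSL2Z_det1_int; last exact: conjPSL.
by rewrite !det_mulmx det_inv det_ratmx GA.1 mulr1 mulrV -?unitmxE.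
Qed.

Lemma rat_content2 (a b : rat) : exists g : rat,
  [/\ exists k : int, a = k%:~R * g, exists k : int, b = k%:~R * g &
      forall y, a * y \is a Num.int -> b * y \is a Num.int -> g * y \is a Num.int].
Proof.
pose d : rat := (denq a * denq b)%:~R.
have d0 : d != 0 by rewrite intr_eq0 mulf_neq0 ?denq_neq0.
pose p := numq (a * d); pose q := numq (b * d).
have ad : a * d = p%:~R.
  by rewrite numqK // /d intrM mulrA -numqE rpredM ?intr_int.
have bd : b * d = q%:~R.
  by rewrite numqK // /d intrM mulrCA -numqE rpredM ?intr_int.
have [u [v bezout]] := Bezoutz p q; clearbody p q d.
exists ((gcdz p q)%:~R / d); split.
- exists (p %/ gcdz p q)%Z.
  by rewrite mulrA -intrM divzK ?dvdz_gcdl // -ad mulfK.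
- exists (q %/ gcdz p q)%Z.
  by rewrite mulrA -intrM divzK ?dvdz_gcdr // -bd mulfK.
move=> y ay byint; rewrite -bezout intrD !intrM -ad -bd.
have -> : ((u%:~R * (a * d) + v%:~R * (b * d)) / d * y)
  = u%:~R * (a * y) + v%:~R * (b * y).
  by field; exact: d0.
by rewrite rpredD // rpredM ?intr_int.
Qed.

Lemma rat_content (s : seq rat) : exists g : rat,
  (forall x, x \in s -> exists k : int, x = k%:~R * g) /\
  (forall y, (forall x, x \in s -> x * y \is a Num.int) -> g * y \is a Num.int).
Proof.
elim: s => [|a s [g [gdvd gint]]].
  by exists 0; split=> // y _; rewrite mul0r rpred0.
have [h [[ka ->] [kg eg] hint]] := rat_content2 a g.
exists h; split=> [x | y sint].
  rewrite inE => /orP[/eqP -> | /gdvd[k ->]]; first by exists ka.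
  by exists (k * kg); rewrite eg mulrA intrM.
apply: hint; first by apply/sint/mem_head.
by apply: gint => x sx; apply/sint; rewrite inE sx orbT.
Qed.

Lemma mx_content m n (X : 'M[rat]_(m, n)) : X != 0 -> exists2 g : rat, g != 0 &
  (forall i j, X i j / g \is a Num.int) /\
  (forall y, (forall i j, X i j * y \is a Num.int) -> g * y \is a Num.int).
Proof.
move=> X0; pose s := [seq X ij.1 ij.2 | ij : 'I_m * 'I_n].
have Xs i j : X i j \in s by apply/imageP; exists (i, j).
have [g [gdvd gint]] := rat_content s.
have g0 : g != 0.
  apply: contraNneq X0 => g0; apply/eqP/matrixP => i j.
  by have [k ->] := gdvd _ (Xs i j); rewrite g0 mulr0 mxE.
exists g => //; split=> [i j | y yint]; last first.
  by apply: gint => _ /mapP[ij _ ->]; apply: yint.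
by have [k ->] := gdvd _ (Xs i j); rewrite mulfK // intr_int.
Qed.

Lemma scaled_unimodular (M : 'M[rat]_2) :
  M \in unitmx -> (forall i j k l, M k i * invmx M j l \is a Num.int) ->
  exists c (B : 'M[int]_2), [/\ c != 0, \det B = 1 \/ \det B = -1 & M = c *: ratmx B].
Proof.
move=> Mu prod_int.
have M0 : M != 0 by apply: contraTneq Mu => ->; rewrite unitmxE det0 unitr0.
have [g g0 [Mg gint]] := mx_content M0.
have [B eB] : exists B, g^-1 *: M = ratmx B.
  by apply/ratmx_intP => i j; rewrite mxE mulrC Mg.
have [C eC] : exists C, g *: invmx M = ratmx C.
  by apply/ratmx_intP => i j; rewrite mxE; apply: gint => k l; apply: prod_int.
have detBC : \det B * \det C = 1.
  apply/eqP; rewrite -(eqr_int rat) rmorph1 rmorphM /= -!det_ratmx -det_mulmx -eB -eC.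
  by rewrite -scalemxAl -scalemxAr scalerA mulVf // scale1r mulmxV // det1.
exists g, B; split => //; first exact: int_unit detBC.
by rewrite -eB scalerA mulfV // scale1r.
Qed.

Definition Jint : 'M[int]_2 := mx22 (-1) 0 0 1.

Lemma ratmx_Jint : ratmx Jint = Jmx.
Proof. by apply: matrix22P; rewrite !mxE /= ?rmorphN1 ?rmorph0 ?rmorph1. Qed.

Lemma Jmx_invol : Jmx *m Jmx = 1.
Proof.
apply: matrix22P; rewrite !mxE !big_ord_recl big_ord0 !mxE /=.
all: by rewrite ?mulN1r ?opprK ?mul0r ?mulr0 ?mul1r ?addr0 ?add0r.
Qed.

Theorem lemma3p2 (M : 'M[rat]_2) :
  M \in unitmx ->
  (forall A : 'M[int]_2, Gamma3 A -> inPSL2Z (M *m ratmx A *m invmx M)) ->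
  inPSL2Z M \/ inPSL2ZJ M.
Proof.
move=> Mu conjPSL.
have [c [B [c0 [detB|detB] ->]]] :=
  scaled_unimodular Mu (Gamma3_conj_int_products Mu conjPSL).
  by left; exists c, B.
right; exists c, (B *m Jint); split=> //; split.
  by rewrite /SL2Z det_mulmx detB det_mx22 !mxE.
by rewrite /ratmx map_mxM -/(ratmx B) -/(ratmx Jint) ratmx_Jint -mulmxA Jmx_invol mulmx1.
Qed.
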